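(* For every finite graph $G$, $\mathrm{copw}_1(G)=\deg(G)+1$.
   Context: Graphs are finite, simple, undirected. The degeneracy $\deg(G)$ is the least $d$ such that there is a total order of $V(G)$ in which every vertex has at most $d$ neighbours preceding it. For $r\in\mathbb N\cup\{\infty\}$ and $k\ge 1$, the Cops and Robber game of radius $r$ and width $k$ on $G$ is played as follows. Let $S_0=\emptyset$; the robber chooses an initial vertex $v_0$. In round $i\ge1$ the cops announce a set $S_i\subseteq V(G)$ with $|S_i|\le k$ (their new positions); knowing $S_i$, the robber moves from $v_{i-1}$ to a vertex $v_i$ along a path of length at most $r$ (any length if $r=\infty$; length $0$ allowed) that contains no vertex of $S_{i-1}\cap S_i$ (the cops that remain on the ground). The cops win if $v_i\in S_i$ for some $i$; the robber wins if this never happens. The radius-$r$ cop-width $\mathrm{copw}_r(G)$ is the least $k$ such that the cops have a winning strategy in this game of radius $r$ and width $k$. *)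

From mathcomp Require Import all_boot.
Set Implicit Arguments. Unset Strict Implicit. Unset Printing Implicit Defensive.

Definition simple_graph (T : finType) (e : rel T) : Prop :=
  symmetric e /\ irreflexive e.

(* A total order of V(G) is given by a bijective ranking f : T -> 'I_#|T|
   (u precedes v iff f u < f v).  [degenerate_at e d]: some total order in
   which every vertex has at most d neighbours preceding it. *)
Definition degenerate_at (T : finType) (e : rel T) (d : nat) : bool :=
  [exists f : {ffun T -> 'I_#|T|},
     injectiveb f &&
     [forall v, #|[set u | e v u & f u < f v]| <= d]].

Lemma degenerate_at_exists (T : finType) (e : rel T) :
  exists d, degenerate_at e d.
Proof.
exists #|T|; apply/existsP; exists [ffun x => enum_rank x].
apply/andP; split.
  by apply/injectiveP => x y; rewrite !ffunE => /enum_rank_inj.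
by apply/forallP => v; apply: max_card.
Qed.

Definition degeneracy (T : finType) (e : rel T) : nat :=
  ex_minn (degenerate_at_exists e).

(* Radius: [Some r] for finite r, [None] for r = infinity. *)
Definition radius := option nat.

Definition short_path_avoiding (T : finType) (e : rel T) (r : radius)
    (X : {set T}) (x y : T) : Prop :=
  exists p : seq T,
    [/\ path e x p, last x p = y,
        (if r is Some n then size p <= n else true)
      & all (fun z => z \notin X) (x :: p)].

(* A cops' strategy maps the history of robber positions [v_0; ...; v_{i-1}]
   to the cops' new position S_i (round i >= 1).  The earlier cop positions
   are determined by the strategy applied to prefixes of the history. *)
Definition cop_strategy (T : finType) := seq T -> {set T}.

Definition cops_at (T : finType) (s : cop_strategy T) (v : nat -> T) (i : nat)
    : {set T} :=
  if i is 0 then set0 else s (mkseq v i).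

Definition legal_move (T : finType) (e : rel T) (r : radius)
    (s : cop_strategy T) (v : nat -> T) (i : nat) : Prop :=
  short_path_avoiding e r (cops_at s v i.-1 :&: cops_at s v i) (v i.-1) (v i).

Definition cops_winning_strategy (T : finType) (e : rel T) (r : radius)
    (k : nat) (s : cop_strategy T) : Prop :=
  (forall h, #|s h| <= k) /\
  forall v : nat -> T,
    (forall i, 0 < i -> legal_move e r s v i) ->
    exists2 i, 0 < i & v i \in cops_at s v i.

Definition cops_win (T : finType) (e : rel T) (r : radius) (k : nat) : Prop :=
  exists s : cop_strategy T, cops_winning_strategy e r k s.

Definition is_copw (T : finType) (e : rel T) (r : radius) (k : nat) : Prop :=
  [/\ 1 <= k, cops_win e r k
    & forall k', 1 <= k' -> cops_win e r k' -> k <= k'].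

From mathcomp Require Import all_boot zify.
Set Implicit Arguments. Unset Strict Implicit.

(* If G is d-degenerate, d+1 cops occupy the robber's vertex together with its
   at most d neighbours preceding it in a degeneracy order.  The robber cannot
   stay, and every edge he may take leads to a later vertex, so his rank grows
   until he is caught.
   Conversely, suppose k cops win.  If some nonempty vertex set B induced a
   subgraph of minimum degree at least k, the robber would survive inside B:
   when the cops land on him they cover at most k-1 of his neighbours in B, so
   he runs to a free one, and the cops that stay cannot block that edge since
   he was not caught in the previous round.  Hence every nonempty B has a vertex
   with fewer than k neighbours in B, and peeling off such vertices one at a
   time yields an order witnessing (k-1)-degeneracy. *)

Lemma index_rcons_lt (T : eqType) (s : seq T) (x u y : T) : y \in s ->
  (index u (rcons s x) < index y (rcons s x)) = (index u s < index y s).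
Proof.
move=> ys; rewrite -cats1 !index_cat ys.
case us: (u \in s) => //; rewrite (memNindex (negbT us)).
by have := index_mem y s; rewrite ys; lia.
Qed.

Lemma index_rcons_lt_last (T : eqType) (s : seq T) (x u : T) : x \notin s ->
  (index u (rcons s x) < index x (rcons s x)) = (u \in s).
Proof.
move=> xs; rewrite -cats1 !index_cat (negbTE xs) /= eqxx addn0.
by case: ifP => us; [rewrite index_mem | lia].
Qed.

Section Degeneracy.

Variables (T : finType) (e : rel T).

Lemma degenerate_at_degeneracy : degenerate_at e (degeneracy e).
Proof. by rewrite /degeneracy; case: ex_minnP. Qed.

Lemma degeneracy_min d : degenerate_at e d -> degeneracy e <= d.
Proof. by rewrite /degeneracy; case: ex_minnP => m _; apply. Qed.

Definition back_degree (s : seq T) (x : T) : nat :=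
  #|[set u | e x u & index u s < index x s]|.

Lemma back_degree_rcons s x y : y \in s ->
  back_degree (rcons s x) y = back_degree s y.
Proof. by move=> ys; apply: eq_card => u; rewrite !inE index_rcons_lt. Qed.

Lemma back_degree_rcons_last s x : x \notin s ->
  back_degree (rcons s x) x = #|[set u in s | e x u]|.
Proof.
by move=> xNs; apply: eq_card => u; rewrite !inE index_rcons_lt_last // andbC.
Qed.

Lemma degenerate_at_of_order d (s : seq T) :
  uniq s -> (forall x, x \in s) -> (forall x, back_degree s x <= d) ->
  degenerate_at e d.
Proof.
move=> s_uniq s_full s_deg.
have size_s : size s = #|T|.
  by rewrite -(card_uniqP s_uniq); apply: eq_card => x; rewrite s_full.
have index_lt x : index x s < #|T| by rewrite -size_s index_mem.
apply/existsP; exists [ffun x => Ordinal (index_lt x)]; apply/andP; split.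
  apply/injectiveP => x y; rewrite !ffunE => /(congr1 val) /=.
  exact: index_inj.
apply/forallP => x; apply: leq_trans (s_deg x); apply/eq_leq/eq_card => u.
by rewrite !inE !ffunE.
Qed.

Section Peeling.

Variable d : nat.
Hypothesis sparse : forall B : {set T}, B != set0 ->
  exists2 x, x \in B & #|[set u in B | e x u]| <= d.

Lemma elimination_order_of_sparse (A : {set T}) :
  exists s, [/\ uniq s, s =i A & forall x, x \in s -> back_degree s x <= d].
Proof.
have [n] := ubnP #|A|; elim: n A => // n IH A A_lt.
have [-> | A0] := eqVneq A set0.
  by exists [::]; split=> // x; rewrite inE.
have [x xA x_deg] := sparse A0.
have [|s [s_uniq s_mem s_deg]] := IH (A :\ x).
  by move: A_lt; rewrite (cardsD1 x A) xA; lia.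
have xNs : x \notin s by rewrite s_mem !inE eqxx.
exists (rcons s x); split.
- by rewrite rcons_uniq xNs.
- by move=> y; rewrite mem_rcons in_cons s_mem !inE; case: eqVneq => [->|].
- move=> y; rewrite mem_rcons in_cons => /predU1P [-> | ys].
    rewrite back_degree_rcons_last //; apply: leq_trans x_deg.
    apply/subset_leq_card/subsetP => u; rewrite !inE s_mem !inE.
    by case/andP=> /andP [_ ->] ->.
  by rewrite back_degree_rcons // s_deg.
Qed.

Lemma degenerate_at_of_sparse : degenerate_at e d.
Proof.
have [s [s_uniq s_mem s_deg]] := elimination_order_of_sparse [set: T].
have s_full x : x \in s by rewrite s_mem inE.
by apply: (degenerate_at_of_order s_uniq s_full) => x; apply: s_deg.
Qed.

End Peeling.

End Degeneracy.

Section Game.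

Variables (T : finType) (e : rel T).

Lemma short_path_avoiding1 (X : {set T}) (x y : T) :
  x \notin X -> y \notin X -> (y == x) || e x y ->
  short_path_avoiding e (Some 1) X x y.
Proof.
move=> xX yX /predU1P [-> | exy].
  by exists [::]; split=> //=; rewrite andbT.
by exists [:: y]; split=> //=; rewrite ?exy ?xX ?yX.
Qed.

Lemma short_path_avoiding1_inv (X : {set T}) (x y : T) :
  short_path_avoiding e (Some 1) X x y -> (y == x) || e x y.
Proof.
case=> p [+ + + _]; case: p => [|z [|? ?]] //= => [_ <- _ | + <- _].
  by rewrite eqxx.
by rewrite andbT orbC => ->.
Qed.

Section RobberPlay.

Variables (s : cop_strategy T) (respond : {set T} -> T -> T) (v0 : T).

Fixpoint robber_history (i : nat) : seq T :=
  if i is i'.+1 then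
    let h := robber_history i' in rcons h (respond (s h) (last v0 h))
  else [:: v0].

Definition robber_play (i : nat) : T := last v0 (robber_history i).

Lemma robber_historyE i : robber_history i = mkseq robber_play i.+1.
Proof.
elim: i => [//|i IH].
by rewrite mkseqS -IH /robber_play /= last_rcons.
Qed.

Lemma robber_playS i :
  robber_play i.+1 = respond (cops_at s robber_play i.+1) (robber_play i).
Proof. by rewrite /robber_play /= last_rcons -robber_historyE. Qed.

End RobberPlay.

Lemma robber_wins_of_escape (k : nat) (B : {set T}) : B != set0 ->
  (forall S : {set T}, #|S| <= k -> forall x, x \in B ->
     exists2 y, y \in B & (y \notin S) && ((y == x) || e x y)) ->
  ~ cops_win e (Some 1) k.
Proof.
move=> /set0Pn [b bB] escape [s [s_le win]].
pose respond (S : {set T}) x :=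
  odflt x [pick y in B | (y \notin S) && ((y == x) || e x y)].
have respondP (S : {set T}) x : #|S| <= k -> x \in B ->
    [&& respond S x \in B, respond S x \notin S
      & (respond S x == x) || e x (respond S x)].
  move=> S_le xB; rewrite /respond; case: pickP => [y /andP [-> //] | none].
  have [y yB y_esc] := escape S S_le x xB.
  by move: (none y); rewrite yB y_esc.
pose v := robber_play s respond b.
have safe i : (v i \in B) && (v i \notin cops_at s v i).
  elim: i => [|i /andP [vB _]]; first by rewrite bB in_set0.
  rewrite /v robber_playS -/v.
  by case/and3P: (respondP _ _ (s_le (mkseq v i.+1)) vB) => ? ? _; apply/andP.
have legal i : 0 < i -> legal_move e (Some 1) s v i.
  case: i => // i _; rewrite /legal_move succnK.
  have /andP [vB vN] := safe i; have /andP [_ wN] := safe i.+1.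
  apply: short_path_avoiding1.
  - by rewrite in_setI (negbTE vN).
  - by rewrite in_setI (negbTE wN) andbF.
  - rewrite /v robber_playS -/v.
    by case/and3P: (respondP _ _ (s_le (mkseq v i.+1)) vB).
have [i _ caught] := win v legal.
by have /andP [_] := safe i; rewrite caught.
Qed.

Lemma escape_of_mindeg (k : nat) (B : {set T}) : irreflexive e ->
  (forall x, x \in B -> k <= #|[set u in B | e x u]|) ->
  forall S : {set T}, #|S| <= k -> forall x, x \in B ->
    exists2 y, y \in B & (y \notin S) && ((y == x) || e x y).
Proof.
move=> irr B_deg S S_le x xB.
have [xS | xNS] := boolP (x \in S); last by exists x; rewrite ?eqxx ?xNS.
have : ~~ (x |: [set u in B | e x u] \subset S).
  apply: contraTN (B_deg x xB) => /subset_leq_card.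
  by rewrite cardsU1 inE irr andbF; lia.
case/subsetPn => y; rewrite !inE => /predU1P [-> | /andP [yB exy]].
  by rewrite xS.
by move=> yNS; exists y; rewrite // yNS exy orbT.
Qed.

Lemma cops_win_sparse (k : nat) : irreflexive e -> cops_win e (Some 1) k ->
  forall B : {set T}, B != set0 ->
  exists2 x, x \in B & #|[set u in B | e x u]| < k.
Proof.
move=> irr win B B0; apply/exists_inP.
apply: contraPT win => /exists_inPn B_deg.
apply: (robber_wins_of_escape B0 (escape_of_mindeg irr _)) => x xB.
by rewrite leqNgt B_deg.
Qed.

Section GuardStrategy.

Variables (n d : nat) (f : T -> 'I_n).
Hypotheses (f_inj : injective f)
  (f_deg : forall x, #|[set u | e x u & f u < f x]| <= d).

Definition guard (x : T) : {set T} := x |: [set u | e x u & f u < f x].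

Definition guard_strategy : cop_strategy T :=
  fun h => if h is y :: h' then guard (last y h') else set0.

Lemma guard_strategy_rcons h x : guard_strategy (rcons h x) = guard x.
Proof. by case: h => [|y h] //=; rewrite last_rcons. Qed.

Lemma card_guard_strategy h : #|guard_strategy h| <= d.+1.
Proof.
case: h => [|y h] /=; first by rewrite cards0.
by rewrite cardsU1 -add1n leq_add ?leq_b1 ?f_deg.
Qed.

Lemma guard_escape_rank (X : {set T}) x y :
  short_path_avoiding e (Some 1) X x y -> y \notin guard x -> f x < f y.
Proof.
move=> /short_path_avoiding1_inv /predU1P [-> | exy]; first by rewrite setU11.
rewrite !inE exy negb_or /= -leqNgt ltn_neqAle => /andP [yx ->]; rewrite andbT.
by apply: contra yx => /eqP/val_inj/f_inj ->.
Qed.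

Lemma guard_strategy_wins :
  cops_winning_strategy e (Some 1) d.+1 guard_strategy.
Proof.
split=> [|v legal]; first exact: card_guard_strategy.
have climb i :
    (exists2 j, 0 < j & v j \in cops_at guard_strategy v j) \/ i <= f (v i).
  elim: i => [|i [caught | IH]]; [by right | by left |].
  have [caught | free] := boolP (v i.+1 \in cops_at guard_strategy v i.+1).
    by left; exists i.+1.
  right; apply: leq_ltn_trans IH (guard_escape_rank (legal i.+1 isT) _).
  by move: free; rewrite /cops_at mkseqS guard_strategy_rcons.
by case: (climb n) => //; rewrite leqNgt ltn_ord.
Qed.

End GuardStrategy.

Lemma cops_win_of_degenerate d : degenerate_at e d -> cops_win e (Some 1) d.+1.
Proof.
case/existsP => f /andP [/injectiveP f_inj /forallP f_deg].
by exists (guard_strategy f); apply: guard_strategy_wins.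
Qed.

End Game.

Theorem mainTheorem1 (T : finType) (e : rel T) :
  simple_graph e -> is_copw e (Some 1) (degeneracy e).+1.
Proof.
move=> [_ irr]; split=> //.
  exact/cops_win_of_degenerate/degenerate_at_degeneracy.
move=> k k_gt0 win.
suff : degeneracy e <= k.-1 by lia.
apply/degeneracy_min/degenerate_at_of_sparse => B B0.
have [x xB x_deg] := cops_win_sparse irr win B0.
by exists x; rewrite // -ltnS prednK.
Qed.
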